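(* Let $k,d,n\in\mathbb N$, $Q,K,V\in\mathbb R^{k\times d}$, $A:=K^\top Q/\sqrt k$ and $R>0$. Masked self-attention $f^m$ with parameters $(A,V)$ is Lipschitz continuous on $B_R^n$ and $$\mathrm{Lip}\big(f^m_{|B_R^n}\big)\le\sqrt3\,\|V\|_2\big(\|A\|_2^2R^4(n+1)+n\big)^{1/2}.$$
   Context: Masked self-attention: for $X=(x_1,\dots,x_n)\in(\mathbb R^d)^n$, $f^m(X)_i=V\sum_{j=1}^iP_{ij}x_j$, $1\le i\le n$, with $P_{ij}=\exp(x_i^\top A^\top x_j)/\sum_{l=1}^i\exp(x_i^\top A^\top x_l)$ for $j\le i$. $B_R\subset\mathbb R^d$ is the closed ball of center 0, radius $R$. $\mathrm{Lip}(f^m_{|\mathcal X})=\sup_{X\ne Y\in\mathcal X}\|f^m(X)-f^m(Y)\|_F/\|X-Y\|_F$ with Frobenius norm $\|X\|_F=(\sum_i|x_i|^2)^{1/2}$; $\|\cdot\|_2$ is the spectral norm. *)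

From HB Require Import structures.
From mathcomp Require Import all_boot all_order all_algebra.
From mathcomp Require Import all_classical all_reals all_analysis.
Set Implicit Arguments. Unset Strict Implicit. Unset Printing Implicit Defensive.
Import Order.TTheory GRing.Theory Num.Theory.
Local Open Scope ring_scope.
Local Open Scope classical_set_scope.

Section Attention.
Variable R : realType.

Definition fnorm (m p : nat) (M : 'M[R]_(m, p)) : R :=
  Num.sqrt (\sum_(i < m) \sum_(j < p) M i j ^+ 2).

Definition spec_norm (m p : nat) (M : 'M[R]_(m, p)) : R :=
  sup [set fnorm (M *m x) | x in [set x : 'cV[R]_p | fnorm x <= 1]].

Definition attA (k d : nat) (Q K : 'M[R]_(k, d)) : 'M[R]_d :=
  (Num.sqrt (k%:R))^-1 *: (K^T *m Q).

(* An input X = (x_1,...,x_n) in (R^d)^n is an n x d matrix whose i-th row is x_i.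
   score A X i j = x_i^T A^T x_j. *)
Definition score (n d : nat) (A : 'M[R]_d) (X : 'M[R]_(n, d)) (i j : 'I_n) : R :=
  ((row i X) *m A^T *m (row j X)^T) 0 0.

Definition maskP (n d : nat) (A : 'M[R]_d) (X : 'M[R]_(n, d)) (i j : 'I_n) : R :=
  expR (score A X i j) / \sum_(l < n | (l <= i)%N) expR (score A X i l).

Definition masked_attn (k n d : nat) (A : 'M[R]_d) (V : 'M[R]_(k, d))
  (X : 'M[R]_(n, d)) : 'M[R]_(n, k) :=
  \matrix_(i < n) (\sum_(j < n | (j <= i)%N) maskP A X i j *: row j X) *m V^T.

Definition inBallN (n d : nat) (r : R) (X : 'M[R]_(n, d)) : Prop :=
  forall i : 'I_n, fnorm (row i X) <= r.

Definition lip_quotients (n d m p : nat) (f : 'M[R]_(n, d) -> 'M[R]_(m, p)) (r : R)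
  : set R :=
  [set t | exists X Y, [/\ inBallN r X, inBallN r Y, X <> Y &
           t = fnorm (f X - f Y) / fnorm (X - Y)]].

Definition lip_const (n d m p : nat) (f : 'M[R]_(n, d) -> 'M[R]_(m, p)) (r : R) : R :=
  sup (lip_quotients f r).

Definition lipschitz_on_ball (n d m p : nat) (f : 'M[R]_(n, d) -> 'M[R]_(m, p)) (r : R)
  : Prop :=
  exists C : R, forall X Y, inBallN r X -> inBallN r Y ->
    fnorm (f X - f Y) <= C * fnorm (X - Y).

End Attention.

From HB Require Import structures.
From mathcomp Require Import all_boot all_order all_algebra.
From mathcomp Require Import all_classical all_reals all_analysis.
From mathcomp Require Import ring lra.
Set Implicit Arguments. Unset Strict Implicit. Unset Printing Implicit Defensive.
Import Order.TTheory GRing.Theory Num.Theory.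
Local Open Scope ring_scope.

(* For X, Y in B_R^n, row i of f^m(X) - f^m(Y) is V applied to
     sum_(j <= i) P_ij(X) (x_j - y_j) + sum_(j <= i) (P_ij(X) - P_ij(Y)) y_j.
   The first sum has norm at most |X - Y|.  The scores x_i^T A^T x_j move by at most
   d_i = |A|_2 R (|x_i - y_i| + |X - Y|), and a softmax whose scores move by at most d
   moves by at most d / (1 - 2 d) in total variation: after reweighting by the old
   softmax this is a mean absolute deviation, controlled by Jensen's inequality and
   Popoviciu's variance bound.  Squaring and summing over the rows gives the claimed
   bound up to a factor 1 / (1 - 4 |A|_2 R |X - Y|); since B_R^n is convex, subdividing
   the segment [X, Y] into short pieces removes this factor. *)

Section RealInequalities.
Variable R : realType.

Lemma ler_sqr_nonneg (a b : R) : 0 <= b -> a ^+ 2 <= b ^+ 2 -> a <= b.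
Proof. by move=> b0 ab; nra. Qed.

Lemma sqrrD3_le (a b c : R) : (a + b + c) ^+ 2 <= 3 * (a ^+ 2 + b ^+ 2 + c ^+ 2).
Proof.
have := sqr_ge0 (a - b); have := sqr_ge0 (b - c); have := sqr_ge0 (a - c); nra.
Qed.

Lemma cauchy_schwarz (I : finType) (f g : I -> R) :
  (\sum_i f i * g i) ^+ 2 <= (\sum_i f i ^+ 2) * (\sum_i g i ^+ 2).
Proof.
set A := \sum_i f i ^+ 2; set B := \sum_i f i * g i; set C := \sum_i g i ^+ 2.
have C0 : 0 <= C by apply: sumr_ge0 => i _; apply: sqr_ge0.
have expand : \sum_i (C * f i - B * g i) ^+ 2 = C * (A * C - B ^+ 2).
  rewrite (eq_bigr (fun i => C ^+ 2 * f i ^+ 2 - (2 * C * B) * (f i * g i)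
                             + B ^+ 2 * g i ^+ 2)); last by move=> i _; ring.
  by rewrite !big_split /= sumrN -!mulr_sumr -/A -/B -/C; ring.
have : 0 <= C * (A * C - B ^+ 2).
  by rewrite -expand; apply: sumr_ge0 => i _; apply: sqr_ge0.
have [C_eq0 _ | C_neq0] := eqVneq C 0; last first.
  by rewrite pmulr_rge0 ?lt0r ?C_neq0 // subr_ge0.
have g0 i : g i = 0.
  apply/eqP; rewrite -sqrf_eq0; move/eqP: C_eq0.
  by rewrite psumr_eq0 => [/allP/(_ i (mem_index_enum _))/implyP/(_ isT)|j _];
    [|exact: sqr_ge0].
have -> : B = 0 by rewrite /B big1 // => i _; rewrite g0 mulr0.
by rewrite expr0n /= mulr_ge0 // sumr_ge0 // => i _; apply: sqr_ge0.
Qed.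

Lemma expR_sub1_le (x : R) : 0 <= x < 1 -> expR x - 1 <= x / (1 - x).
Proof.
case/andP=> x0 x1; have x1p : 0 < 1 - x by rewrite subr_gt0.
have e1 : 1 - x <= expR (- x) := expR_ge1Dx (- x).
have ex : expR x * (1 - x) <= 1.
  by rewrite -[leRHS](expRxMexpNx_1 x) ler_wpM2l ?expR_ge0.
rewrite ler_pdivlMr //; nra.
Qed.

Lemma expR_spread_le (de E : R) : 0 <= de -> 2 * de < 1 -> expR (- de) <= E ->
  (expR de / E - expR (- de) / E) / 2 <= de / (1 - 2 * de).
Proof.
move=> de0 de_lt E_ge.
have E_gt0 : 0 < E by apply: lt_le_trans E_ge; apply: expR_gt0.
have invE_le : E^-1 <= expR de.
  by rewrite -[expR de]invrK -expRN lef_pV2 ?posrE ?expR_gt0.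
have spread0 : 0 <= expR de - expR (- de) by rewrite subr_ge0 ler_expR; lra.
have spread_expR : (expR de - expR (- de)) * expR de = expR (2 * de) - 1.
  by rewrite mulrBl -expRD mulrC expRxMexpNx_1 mulr2n mulrDl mul1r.
have spread_le : (expR de - expR (- de)) * expR de <= 2 * de / (1 - 2 * de).
  by rewrite spread_expR; apply: expR_sub1_le; apply/andP; split; lra.
rewrite -mulrBl ler_pdivrMr // [leRHS]mulrC mulrA.
exact: le_trans (ler_wpM2l spread0 invE_le) spread_le.
Qed.

End RealInequalities.

Section FrobeniusNorm.
Variable R : realType.

Definition fdot (m p : nat) (M N : 'M[R]_(m, p)) : R := \sum_i \sum_j M i j * N i j.

Variables m p : nat.
Implicit Types M N : 'M[R]_(m, p).

Lemma fnorm_ge0 M : 0 <= fnorm M.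
Proof. exact: sqrtr_ge0. Qed.

Lemma fnorm_sqr M : fnorm M ^+ 2 = \sum_i \sum_j M i j ^+ 2.
Proof.
by rewrite sqr_sqrtr // sumr_ge0 // => i _; rewrite sumr_ge0 // => j _; apply: sqr_ge0.
Qed.

Lemma fdot_abs_le M N : `|fdot M N| <= fnorm M * fnorm N.
Proof.
apply: ler_sqr_nonneg; first by rewrite mulr_ge0 ?fnorm_ge0.
rewrite exprMn !fnorm_sqr real_normK ?num_real // /fdot !pair_bigA /=.
exact: (cauchy_schwarz (fun q : 'I_m * 'I_p => M q.1 q.2) (fun q => N q.1 q.2)).
Qed.

Lemma fnormD M N : fnorm (M + N) <= fnorm M + fnorm N.
Proof.
apply: ler_sqr_nonneg; first by rewrite addr_ge0 ?fnorm_ge0.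
have -> : fnorm (M + N) ^+ 2 = fnorm M ^+ 2 + 2 * fdot M N + fnorm N ^+ 2.
  rewrite !fnorm_sqr /fdot mulr_sumr -!big_split /=; apply: eq_bigr => i _.
  by rewrite mulr_sumr -!big_split /=; apply: eq_bigr => j _; rewrite mxE; ring.
have := ler_norm (fdot M N); have := fdot_abs_le M N; nra.
Qed.

Lemma fnormZ c M : fnorm (c *: M) = `|c| * fnorm M.
Proof.
rewrite /fnorm -sqrtr_sqr -sqrtrM ?sqr_ge0 // mulr_sumr; congr Num.sqrt.
by apply: eq_bigr => i _; rewrite mulr_sumr; apply: eq_bigr => j _; rewrite mxE exprMn.
Qed.

Lemma fnormN M : fnorm (- M) = fnorm M.
Proof. by rewrite -scaleN1r fnormZ normrN normr1 mul1r. Qed.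

Lemma fnormBC M N : fnorm (M - N) = fnorm (N - M).
Proof. by rewrite -fnormN opprB. Qed.

Lemma fnorm0 : fnorm (0 : 'M[R]_(m, p)) = 0.
Proof. by rewrite -(scale0r (0 : 'M[R]_(m, p))) fnormZ normr0 mul0r. Qed.

Lemma fnorm_sum (I : Type) (r : seq I) (P : pred I) (F : I -> 'M[R]_(m, p)) :
  fnorm (\sum_(i <- r | P i) F i) <= \sum_(i <- r | P i) fnorm (F i).
Proof.
elim/big_rec2: _ => [|i y M _ IH]; first by rewrite fnorm0.
by apply: le_trans (fnormD _ _) _; rewrite lerD2l.
Qed.

Lemma fnorm_eq0 M : fnorm M = 0 -> M = 0.
Proof.
move=> M0; have /eqP : \sum_i \sum_j M i j ^+ 2 = 0 by rewrite -fnorm_sqr M0 expr0n.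
rewrite psumr_eq0 => [/allP sum0|i _]; last by rewrite sumr_ge0 // => j _; apply: sqr_ge0.
apply/matrixP => i j; have := sum0 i (mem_index_enum _).
rewrite implyTb psumr_eq0 => [/allP/(_ j (mem_index_enum _))|l _]; last exact: sqr_ge0.
by rewrite implyTb sqrf_eq0 mxE => /eqP.
Qed.

Lemma fnorm_tr M : fnorm M^T = fnorm M.
Proof.
rewrite /fnorm exchange_big; congr Num.sqrt.
by apply: eq_bigr => i _; apply: eq_bigr => j _; rewrite mxE.
Qed.

End FrobeniusNorm.

Section FrobeniusRows.
Variable R : realType.
Variables m p : nat.
Implicit Types M : 'M[R]_(m, p).

Lemma fnorm_sqr_rows M : fnorm M ^+ 2 = \sum_i fnorm (row i M) ^+ 2.
Proof.
rewrite fnorm_sqr; apply: eq_bigr => i _.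
by rewrite fnorm_sqr big_ord1; apply: eq_bigr => j _; rewrite mxE.
Qed.

Lemma fnorm_row_le i M : fnorm (row i M) <= fnorm M.
Proof.
apply: ler_sqr_nonneg; first exact: fnorm_ge0.
rewrite [leRHS]fnorm_sqr_rows (bigD1 i) //= lerDl.
by rewrite sumr_ge0 // => l _; apply: sqr_ge0.
Qed.

Lemma fdot_rowE (u w : 'rV[R]_p) : (u *m w^T) 0 0 = fdot u w.
Proof. by rewrite /fdot big_ord1 mxE; apply: eq_bigr => l _; rewrite mxE. Qed.

End FrobeniusRows.

Lemma fnorm_mulmx_le (R : realType) (m p q : nat) (M : 'M[R]_(m, p)) (N : 'M[R]_(p, q)) :
  fnorm (M *m N) <= fnorm M * fnorm N.
Proof.
apply: ler_sqr_nonneg; first by rewrite mulr_ge0 ?fnorm_ge0.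
rewrite exprMn !fnorm_sqr [X in _ * X]exchange_big /= mulr_suml.
apply: ler_sum => i _; rewrite mulr_sumr; apply: ler_sum => j _; rewrite mxE.
exact: (cauchy_schwarz (fun l => M i l) (fun l => N l j)).
Qed.

Lemma fnorm_sqr_le_rows (R : realType) (n p q : nat) (M : 'M[R]_(n, p)) (N : 'M[R]_(n, q))
    (v g : R) : 0 <= v -> 0 <= g ->
  (forall i, fnorm (row i M) <= v * (fnorm N + g * (fnorm (row i N) + fnorm N))) ->
  fnorm M ^+ 2 <= 3 * v ^+ 2 * fnorm N ^+ 2 * (n%:R + g ^+ 2 * (n%:R + 1)).
Proof.
move=> v0 g0 rowM_le; set D := fnorm N.
rewrite fnorm_sqr_rows.
apply: le_trans (_ : _ <= \sum_i v ^+ 2 * (3 * (D ^+ 2 + (g * fnorm (row i N)) ^+ 2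
                                               + (g * D) ^+ 2))) _.
  apply: ler_sum => i _.
  apply: le_trans (_ : _ <= (v * (D + g * fnorm (row i N) + g * D)) ^+ 2) _.
    rewrite -addrA -mulrDr; apply: lerXn2r; rewrite ?nnegrE ?fnorm_ge0 ?rowM_le //.
    apply: mulr_ge0 => //; apply: addr_ge0; rewrite ?fnorm_ge0 //.
    by rewrite mulr_ge0 // addr_ge0 ?fnorm_ge0.
  by rewrite exprMn; apply: ler_wpM2l; [exact: sqr_ge0 | exact: sqrrD3_le].
rewrite -!mulr_sumr !big_split /=.
under [X in _ + X + _]eq_bigr => i _ do rewrite exprMn.
rewrite -[X in _ + X + _]mulr_sumr -(fnorm_sqr_rows N) -/D !sumr_const card_ord.
by rewrite le_eqVlt; apply/orP; left; apply/eqP; ring.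
Qed.

Local Open Scope classical_set_scope.

Section SpectralNorm.
Variable R : realType.
Variables m p : nat.
Implicit Types M : 'M[R]_(m, p).

Lemma spec_norm_has_ub M :
  has_ubound [set fnorm (M *m x) | x in [set x : 'cV[R]_p | fnorm x <= 1]].
Proof.
exists (fnorm M) => _ [x /= x1 <-].
by apply: le_trans (fnorm_mulmx_le _ _) _; rewrite ler_piMr ?fnorm_ge0.
Qed.

Lemma spec_norm_ge0 M : 0 <= spec_norm M.
Proof.
apply: (ub_le_sup (spec_norm_has_ub M)); exists 0 => /=; first by rewrite fnorm0.
by rewrite mulmx0 fnorm0.
Qed.

Lemma spec_norm_mulmx_le M (x : 'cV[R]_p) : fnorm (M *m x) <= spec_norm M * fnorm x.
Proof.
have [x0|x_neq0] := eqVneq (fnorm x) 0.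
  by rewrite (fnorm_eq0 x0) mulmx0 !fnorm0 mulr0.
have x_gt0 : 0 < fnorm x by rewrite lt0r x_neq0 fnorm_ge0.
have : fnorm (M *m ((fnorm x)^-1 *: x)) <= spec_norm M.
  apply: (ub_le_sup (spec_norm_has_ub M)); exists ((fnorm x)^-1 *: x) => //=.
  by rewrite fnormZ ger0_norm ?invr_ge0 ?fnorm_ge0 // mulVf.
rewrite -scalemxAr fnormZ ger0_norm ?invr_ge0 ?fnorm_ge0 //.
by rewrite -ler_pdivrMr // mulrC.
Qed.

Lemma fnorm_mul_trmx_le (u : 'rV[R]_p) M : fnorm (u *m M^T) <= spec_norm M * fnorm u.
Proof. by rewrite -fnorm_tr trmx_mul trmxK -(fnorm_tr u) spec_norm_mulmx_le. Qed.

Lemma bilinear_form_le (u : 'rV[R]_p) (w : 'rV[R]_m) M :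
  `|(u *m M^T *m w^T) 0 0| <= spec_norm M * fnorm u * fnorm w.
Proof.
rewrite fdot_rowE; apply: le_trans (fdot_abs_le _ _) _.
by rewrite ler_wpM2r ?fnorm_ge0 ?fnorm_mul_trmx_le.
Qed.

End SpectralNorm.

Section WeightedDeviation.
Variable R : realType.
Variables (I : finType) (P : pred I) (pr : I -> R).
Hypotheses (pr_ge0 : forall j, 0 <= pr j) (pr_sum1 : \sum_(j | P j) pr j = 1).

Lemma jensen_sqr_abs (w : I -> R) :
  (\sum_(j | P j) pr j * `|w j|) ^+ 2 <= \sum_(j | P j) pr j * w j ^+ 2.
Proof.
set m1 := \sum_(j | P j) pr j * `|w j|.
have : 0 <= \sum_(j | P j) pr j * (`|w j| - m1) ^+ 2.
  by apply: sumr_ge0 => j _; rewrite mulr_ge0 ?sqr_ge0.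
have -> : \sum_(j | P j) pr j * (`|w j| - m1) ^+ 2 =
    \sum_(j | P j) pr j * w j ^+ 2 - 2 * m1 * m1 + m1 ^+ 2 * \sum_(j | P j) pr j.
  rewrite (eq_bigr (fun j => pr j * w j ^+ 2 - (2 * m1) * (pr j * `|w j|)
                             + m1 ^+ 2 * pr j)); last first.
    by move=> j _; rewrite -[w j ^+ 2]real_normK ?num_real //; ring.
  by rewrite !big_split /= sumrN -!mulr_sumr.
rewrite pr_sum1; lra.
Qed.

Lemma popoviciu_le (rho : I -> R) (lo hi : R) :
  \sum_(j | P j) pr j * rho j = 1 -> (forall j, P j -> lo <= rho j <= hi) ->
  \sum_(j | P j) pr j * (rho j - 1) ^+ 2 <= ((hi - lo) / 2) ^+ 2.
Proof.
move=> mean1 rho_in.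
(* [(rho - 1)^2 <= (hi + lo - 2) rho + 1 - hi lo] is [(hi - rho) (rho - lo) >= 0] *)
apply: (@le_trans _ _ (\sum_(j | P j) pr j * ((hi + lo - 2) * rho j + (1 - hi * lo)))).
  apply: ler_sum => j Pj; rewrite ler_wpM2l //.
  by have /andP[] := rho_in j Pj; nra.
rewrite (eq_bigr (fun j => (hi + lo - 2) * (pr j * rho j) + (1 - hi * lo) * pr j));
  last by move=> j _; ring.
rewrite big_split /= -!mulr_sumr mean1 pr_sum1.
by have := sqr_ge0 ((hi + lo) / 2 - 1); nra.
Qed.

Lemma mean_abs_dev_le (rho : I -> R) (lo hi : R) :
  \sum_(j | P j) pr j * rho j = 1 -> (forall j, P j -> lo <= rho j <= hi) ->
  \sum_(j | P j) pr j * `|rho j - 1| <= (hi - lo) / 2.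
Proof.
move=> mean1 rho_in.
have lo_hi : lo <= hi.
  rewrite -[lo]mul1r -[hi]mul1r -pr_sum1 !mulr_suml; apply: ler_sum => j Pj.
  by case/andP: (rho_in j Pj) => lo_rho rho_hi; apply/ler_wpM2l/(le_trans lo_rho).
apply: ler_sqr_nonneg; first by rewrite divr_ge0 // subr_ge0.
exact: le_trans (jensen_sqr_abs _) (popoviciu_le mean1 rho_in).
Qed.

End WeightedDeviation.

Section Softmax.
Variable R : realType.
Variables (I : finType) (P : pred I) (j0 : I).
Hypothesis Pj0 : P j0.

Definition softmax (s : I -> R) (j : I) := expR (s j) / \sum_(l | P l) expR (s l).

Lemma sum_expR_gt0 (s : I -> R) : 0 < \sum_(l | P l) expR (s l).
Proof.
rewrite (bigD1 j0) //= ltr_wpDr ?expR_gt0 //.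
by rewrite sumr_ge0 // => l _; apply: expR_ge0.
Qed.

Lemma softmax_ge0 (s : I -> R) j : 0 <= softmax s j.
Proof. by rewrite divr_ge0 ?expR_ge0 // ltW // sum_expR_gt0. Qed.

Lemma softmax_sum1 (s : I -> R) : \sum_(j | P j) softmax s j = 1.
Proof. by rewrite -mulr_suml divff // lt0r_neq0 // sum_expR_gt0. Qed.

Lemma softmax_shift (s t : I -> R) j :
  softmax t j =
  softmax s j * expR (t j - s j) / \sum_(l | P l) softmax s l * expR (t l - s l).
Proof.
have Zs := sum_expR_gt0 s; have Zt := sum_expR_gt0 t.
have expRt l : expR (t l) = expR (s l) * expR (t l - s l) by rewrite -expRD addrC subrK.
have -> : \sum_(l | P l) softmax s l * expR (t l - s l) =
          (\sum_(l | P l) expR (t l)) / \sum_(l | P l) expR (s l).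
  by rewrite mulr_suml; apply: eq_bigr => l _; rewrite /softmax expRt mulrAC.
by rewrite /softmax expRt; field; rewrite !lt0r_neq0.
Qed.

Lemma softmax_tv_le (s t : I -> R) (de : R) : 0 <= de -> 2 * de < 1 ->
  (forall j, P j -> `|t j - s j| <= de) ->
  \sum_(j | P j) `|softmax s j - softmax t j| <= de / (1 - 2 * de).
Proof.
move=> de0 de_lt st_de.
set p := softmax s; set E := \sum_(l | P l) p l * expR (t l - s l).
have p0 := softmax_ge0 s; have p1 := softmax_sum1 s.
have e_in j : P j -> expR (- de) <= expR (t j - s j) <= expR de.
  by move=> Pj; have := st_de j Pj; rewrite ler_norml !ler_expR.
have E_ge : expR (- de) <= E.
  rewrite -[leLHS]mul1r -p1 mulr_suml; apply: ler_sum => j Pj.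
  by rewrite ler_wpM2l //; case/andP: (e_in j Pj).
have E_gt0 : 0 < E by apply: lt_le_trans E_ge; apply: expR_gt0.
pose rho j := expR (t j - s j) / E.
have mean1 : \sum_(j | P j) p j * rho j = 1.
  rewrite (eq_bigr (fun j => p j * expR (t j - s j) / E)) => [|j _]; last exact: mulrA.
  by rewrite -mulr_suml divff ?gt_eqF.
have rho_in j : P j -> expR (- de) / E <= rho j <= expR de / E.
  by move=> Pj; rewrite /rho !ler_pM2r ?invr_gt0 ?e_in.
have -> : \sum_(j | P j) `|p j - softmax t j| = \sum_(j | P j) p j * `|rho j - 1|.
  apply: eq_bigr => j _; rewrite (softmax_shift s) -/p -/E -mulrA -/(rho j).
  by rewrite -[X in X - _]mulr1 -mulrBr distrC normrM ger0_norm.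
exact: le_trans (mean_abs_dev_le p0 p1 mean1 rho_in) (expR_spread_le de0 de_lt E_ge).
Qed.

Lemma softmax_perturb_le (dim : nat) (s t : I -> R) (y : I -> 'rV[R]_dim) (rad de : R) :
  0 <= de -> 2 * de < 1 -> (forall j, P j -> `|t j - s j| <= de) ->
  (forall j, P j -> fnorm (y j) <= rad) ->
  fnorm (\sum_(j | P j) (softmax s j - softmax t j) *: y j) <= rad * (de / (1 - 2 * de)).
Proof.
move=> de0 de_lt st_de y_rad.
have rad0 : 0 <= rad by apply: le_trans (y_rad j0 Pj0); apply: fnorm_ge0.
apply: le_trans (fnorm_sum _ _ _) _.
apply: le_trans (_ : _ <= \sum_(j | P j) `|softmax s j - softmax t j| * rad) _.
  by apply: ler_sum => j Pj; rewrite fnormZ ler_wpM2l ?y_rad.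
by rewrite -mulr_suml mulrC ler_wpM2l ?softmax_tv_le.
Qed.

End Softmax.

Section MaskedAttention.
Variable R : realType.
Variables (n d k : nat) (A : 'M[R]_d) (V : 'M[R]_(k, d)).
Implicit Types X Y : 'M[R]_(n, d).

Lemma score_diff_le (r : R) X Y i j : inBallN r X -> inBallN r Y ->
  `|score A Y i j - score A X i j| <=
    spec_norm A * r * (fnorm (row i (X - Y)) + fnorm (row j (X - Y))).
Proof.
move=> Xr Yr.
have -> : score A Y i j - score A X i j =
    ((row i Y - row i X) *m A^T *m (row j Y)^T) 0 0 +
    (row i X *m A^T *m (row j Y - row j X)^T) 0 0.
  by rewrite /score linearB /= !(mulmxBl, mulmxBr) !mxE; ring.
apply: le_trans (ler_normD _ _) _; rewrite mulrDr lerD //.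
  apply: le_trans (bilinear_form_le _ _ _) _.
  rewrite [row i (X - Y)]linearB fnormBC -!mulrA ler_wpM2l ?spec_norm_ge0 //.
  by rewrite mulrC ler_wpM2r ?fnorm_ge0.
apply: le_trans (bilinear_form_le _ _ _) _.
rewrite [row j (X - Y)]linearB fnormBC -!mulrA ler_wpM2l ?spec_norm_ge0 //.
by rewrite ler_wpM2r ?fnorm_ge0.
Qed.

Definition attn_row X (i : 'I_n) : 'rV[R]_d :=
  \sum_(j < n | (j <= i)%N) maskP A X i j *: row j X.

Lemma row_masked_attn X i : row i (masked_attn A V X) = attn_row X i *m V^T.
Proof.
by apply/rowP => j; rewrite !mxE; apply: eq_bigr => l _; rewrite !mxE.
Qed.

Lemma attn_row_dist_le (r de : R) X Y i : inBallN r X -> inBallN r Y ->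
  spec_norm A * r * (fnorm (row i (X - Y)) + fnorm (X - Y)) <= de -> 2 * de < 1 ->
  fnorm (attn_row X i - attn_row Y i) <= fnorm (X - Y) + r * (de / (1 - 2 * de)).
Proof.
move=> Xr Yr de_ge de_lt; pose P (l : 'I_n) := (l <= i)%N; have Pi : P i by rewrite /P.
have r0 : 0 <= r by apply: le_trans (Xr i); apply: fnorm_ge0.
have de0 : 0 <= de.
  by apply: le_trans de_ge; rewrite !mulr_ge0 ?addr_ge0 ?spec_norm_ge0 ?fnorm_ge0.
have -> : attn_row X i - attn_row Y i =
    \sum_(j | P j) softmax P (score A X i) j *: (row j X - row j Y) +
    \sum_(j | P j) (softmax P (score A X i) j - softmax P (score A Y i) j) *: row j Y.
  rewrite /attn_row -sumrB -big_split; apply: eq_bigr => j _ /=.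
  by rewrite scalerBr scalerBl addrA subrK.
apply: le_trans (fnormD _ _) _; apply: lerD.
  apply: le_trans (fnorm_sum _ _ _) _.
  rewrite -[leRHS]mul1r -(softmax_sum1 Pi (score A X i)) mulr_suml.
  apply: ler_sum => j _; rewrite fnormZ ger0_norm ?(softmax_ge0 Pi) //.
  by rewrite ler_wpM2l ?(softmax_ge0 Pi) // -[_ - _]linearB fnorm_row_le.
apply: (softmax_perturb_le Pi) => // j Pj.
apply: le_trans (score_diff_le i j Xr Yr) _; apply: le_trans de_ge.
by rewrite ler_wpM2l ?mulr_ge0 ?spec_norm_ge0 // lerD2l fnorm_row_le.
Qed.


Lemma masked_attn_row_le (r : R) X Y i : 0 <= r -> inBallN r X -> inBallN r Y ->
  4 * spec_norm A * r * fnorm (X - Y) < 1 ->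
  fnorm (row i (masked_attn A V X - masked_attn A V Y)) <=
    spec_norm V * (fnorm (X - Y) + spec_norm A * r ^+ 2 /
      (1 - 4 * spec_norm A * r * fnorm (X - Y)) * (fnorm (row i (X - Y)) + fnorm (X - Y))).
Proof.
move=> r0 Xr Yr c_lt.
set D := fnorm (X - Y); set a := spec_norm A; set c := 4 * a * r * D.
set de := a * r * (fnorm (row i (X - Y)) + D).
have a0 : 0 <= a by apply: spec_norm_ge0.
have de0 : 0 <= de by rewrite !mulr_ge0 ?addr_ge0 ?fnorm_ge0.
have de2_le : 2 * de <= c.
  have := fnorm_row_le i (X - Y); have := mulr_ge0 a0 r0; rewrite /c /de -/D; nra.
have de_lt : 2 * de < 1 := le_lt_trans de2_le c_lt.
rewrite linearB /= !row_masked_attn -mulmxBl.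
apply: le_trans (fnorm_mul_trmx_le _ _) _; rewrite ler_wpM2l ?spec_norm_ge0 //.
apply: le_trans (attn_row_dist_le Xr Yr (lexx de) de_lt) _; rewrite lerD2l.
have -> : a * r ^+ 2 / (1 - c) * (fnorm (row i (X - Y)) + D) = r * (de / (1 - c)).
  by rewrite /de; field; rewrite gt_eqF ?subr_gt0.
by rewrite ler_wpM2l // ler_wpM2l // lef_pV2 ?posrE ?subr_gt0 //; lra.
Qed.

Definition attn_lip_bound (r : R) : R := Num.sqrt 3 * spec_norm V *
  Num.sqrt (spec_norm A ^+ 2 * r ^+ 4 * (n%:R + 1) + n%:R).

Lemma attn_lip_bound_ge0 r : 0 <= attn_lip_bound r.
Proof. by rewrite !mulr_ge0 ?sqrtr_ge0 ?spec_norm_ge0. Qed.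

Lemma attn_lip_bound_sqr r : attn_lip_bound r ^+ 2 =
  3 * spec_norm V ^+ 2 * (spec_norm A ^+ 2 * r ^+ 4 * (n%:R + 1) + n%:R).
Proof.
rewrite !exprMn !sqr_sqrtr ?ler0n // addr_ge0 ?ler0n // mulr_ge0 ?addr_ge0 ?ler0n //.
by rewrite mulr_ge0 ?sqr_ge0 ?exprn_even_ge0.
Qed.

Lemma masked_attn_local_le (r : R) X Y : 0 <= r -> inBallN r X -> inBallN r Y ->
  4 * spec_norm A * r * fnorm (X - Y) < 1 ->
  fnorm (masked_attn A V X - masked_attn A V Y) * (1 - 4 * spec_norm A * r * fnorm (X - Y))
    <= attn_lip_bound r * fnorm (X - Y).
Proof.
move=> r0 Xr Yr c_lt.
set D := fnorm (X - Y); set a := spec_norm A; set c := 4 * a * r * D.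
have [a0 D0] : 0 <= a /\ 0 <= D by split; rewrite ?spec_norm_ge0 ?fnorm_ge0.
have c0 : 0 <= c by rewrite !mulr_ge0.
have c_gap : 0 < 1 - c by rewrite subr_gt0.
have g0 : 0 <= a * r ^+ 2 / (1 - c) by rewrite divr_ge0 ?mulr_ge0 ?sqr_ge0 ?(ltW c_gap).
have := fnorm_sqr_le_rows (spec_norm_ge0 V) g0 (fun i => masked_attn_row_le i r0 Xr Yr c_lt).
move=> sum_le.
apply: ler_sqr_nonneg; first by rewrite mulr_ge0 ?attn_lip_bound_ge0.
rewrite (exprMn _ (attn_lip_bound r)) attn_lip_bound_sqr exprMn.
apply: le_trans (ler_wpM2r (sqr_ge0 _) sum_le) _.
have n_gap : n%:R * (1 - c) ^+ 2 <= n%:R.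
  by rewrite ler_piMr ?ler0n //; nra.
have -> : 3 * spec_norm V ^+ 2 * D ^+ 2 * (n%:R + (a * r ^+ 2 / (1 - c)) ^+ 2 * (n%:R + 1))
      * (1 - c) ^+ 2 =
    3 * spec_norm V ^+ 2 * D ^+ 2 * (n%:R * (1 - c) ^+ 2 + a ^+ 2 * r ^+ 4 * (n%:R + 1)).
  by field; rewrite gt_eqF.
rewrite -/a [leRHS]mulrAC; apply: ler_wpM2l; last lra.
by rewrite mulr_ge0 ?sqr_ge0 // mulr_ge0 ?sqr_ge0.
Qed.

End MaskedAttention.

Section LocalToGlobal.
Variable R : realType.

Lemma ler_of_forall_nat (x a b : R) : 0 <= b ->
  (forall N : nat, b < N%:R -> x * (1 - b / N%:R) <= a) -> x <= a.
Proof.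
move=> b0 x_le; rewrite leNgt; apply/negP => a_lt_x.
pose N := (Num.truncn (Num.max b (x * b / (x - a)))).+1.
have : Num.max b (x * b / (x - a)) < N%:R by apply: truncnS_gt.
rewrite gt_max => /andP[b_lt_N].
rewrite ltr_pdivrMr ?subr_gt0 // mulrC -ltr_pdivrMl ?(le_lt_trans b0) // mulrC.
have := x_le N b_lt_N; rewrite mulrBr mulr1 mulrA; lra.
Qed.

Variables m p q s : nat.

Lemma lipschitz_of_local (f : 'M[R]_(m, p) -> 'M[R]_(q, s)) (S : set 'M[R]_(m, p)) (L c : R) :
  0 <= c -> (forall X Y t, 0 <= t <= 1 -> S X -> S Y -> S (X + t *: (Y - X))) ->
  (forall X Y, S X -> S Y -> c * fnorm (X - Y) < 1 ->
     fnorm (f X - f Y) * (1 - c * fnorm (X - Y)) <= L * fnorm (X - Y)) ->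
  forall X Y, S X -> S Y -> fnorm (f X - f Y) <= L * fnorm (X - Y).
Proof.
move=> c0 S_seg f_loc X Y SX SY; set D := fnorm (X - Y).
apply: (@ler_of_forall_nat _ _ (c * D)); first by rewrite mulr_ge0 ?fnorm_ge0.
move=> N cD_lt_N.
have N_gt0 : 0 < N%:R :> R by apply: le_lt_trans cD_lt_N; rewrite mulr_ge0 ?fnorm_ge0.
have gap0 : 0 <= 1 - c * D / N%:R by rewrite subr_ge0 ler_pdivrMr ?mul1r ?ltW.
pose Z (j : nat) := X + (j%:R / N%:R) *: (Y - X).
have SZ j : (j <= N)%N -> S (Z j).
  by move=> jN; apply: S_seg => //; rewrite divr_ge0 ?ler0n ?ler_pdivrMr ?mul1r ?ler_nat.
have dZ j : fnorm (Z j - Z j.+1) = D / N%:R.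
  have -> : Z j - Z j.+1 = (- (N%:R)^-1) *: (Y - X).
    by apply/matrixP => a b; rewrite !mxE -natr1; field; rewrite gt_eqF.
  by rewrite fnormZ normrN ger0_norm ?invr_ge0 ?ltW // fnormBC mulrC.
have step j : (j < N)%N ->
    fnorm (f (Z j.+1) - f (Z j)) * (1 - c * D / N%:R) <= L * D / N%:R.
  move=> jN; have := f_loc _ _ (SZ j (ltnW jN)) (SZ j.+1 jN).
  rewrite [fnorm (f _ - _)]fnormBC !dZ !mulrA; apply.
  by rewrite ltr_pdivrMr ?mul1r.
have -> : f X - f Y = - \sum_(0 <= j < N) (f (Z j.+1) - f (Z j)).
  rewrite telescope_sumr // opprB /Z !mul0r scale0r addr0 divff ?gt_eqF //.
  by rewrite scale1r addrCA subrr addr0.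
rewrite fnormN; apply: le_trans (ler_wpM2r gap0 (fnorm_sum _ _ _)) _.
rewrite mulr_suml; apply: le_trans (_ : _ <= \sum_(0 <= j < N) L * D / N%:R) _.
  by apply: ler_sum_nat => j /andP[_ jN]; apply: step.
by rewrite sumr_const_nat subn0 -(mulr_natr (L * D / N%:R)) divfK ?gt_eqF.
Qed.

End LocalToGlobal.

Section LipschitzConstant.
Variable R : realType.
Variables n d m p : nat.

Lemma inBallN_segment (r t : R) (X Y : 'M[R]_(n, d)) : 0 <= t <= 1 ->
  inBallN r X -> inBallN r Y -> inBallN r (X + t *: (Y - X)).
Proof.
case/andP=> t0 t1 Xr Yr i.
have -> : row i (X + t *: (Y - X)) = (1 - t) *: row i X + t *: row i Y.
  by apply/rowP => j; rewrite !mxE; ring.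
apply: le_trans (fnormD _ _) _; rewrite !fnormZ !ger0_norm ?subr_ge0 //.
by have := Xr i; have := Yr i; nra.
Qed.

Lemma lip_const_le (f : 'M[R]_(n, d) -> 'M[R]_(m, p)) (r C : R) : 0 <= C ->
  (forall X Y, inBallN r X -> inBallN r Y -> fnorm (f X - f Y) <= C * fnorm (X - Y)) ->
  lip_const f r <= C.
Proof.
move=> C0 f_lip; rewrite /lip_const.
have [[t quot_t]|no_quot] := pselect (exists t, lip_quotients f r t); last first.
  suff -> : lip_quotients f r = set0 by rewrite sup0.
  by apply/seteqP; split => t // quot_t; apply: no_quot; exists t.
apply: ge_sup; first by exists t.
move=> _ [X [Y [Xr Yr XY ->]]].
have D_gt0 : 0 < fnorm (X - Y).
  rewrite lt0r fnorm_ge0 andbT; apply/eqP => /fnorm_eq0/eqP.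
  by rewrite subr_eq0 => /eqP.
by rewrite ler_pdivrMr // f_lip.
Qed.

End LipschitzConstant.

Lemma masked_attn_lipschitz (R : realType) (n d k : nat) (A : 'M[R]_d) (V : 'M[R]_(k, d))
    (r : R) (X Y : 'M[R]_(n, d)) : 0 <= r -> inBallN r X -> inBallN r Y ->
  fnorm (masked_attn A V X - masked_attn A V Y) <= attn_lip_bound n A V r * fnorm (X - Y).
Proof.
move=> r0; apply: (lipschitz_of_local (c := 4 * spec_norm A * r)).
- by rewrite !mulr_ge0 ?spec_norm_ge0.
- by move=> X' Y' t; apply: inBallN_segment.
- by move=> X' Y'; apply: masked_attn_local_le.
Qed.

Theorem mainTheorem10 (R : realType) (k d n : nat) (Q K V : 'M[R]_(k, d)) (r : R) :
  0 < r ->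
  lipschitz_on_ball (@masked_attn R k n d (attA Q K) V) r /\
  lip_const (@masked_attn R k n d (attA Q K) V) r <=
    Num.sqrt 3 * spec_norm V *
    Num.sqrt (spec_norm (attA Q K) ^+ 2 * r ^+ 4 * (n%:R + 1) + n%:R).
Proof.
move=> r_gt0; have attn_lip := @masked_attn_lipschitz R n d k (attA Q K) V r _ _ (ltW r_gt0).
split; first by exists (attn_lip_bound n (attA Q K) V r).
by apply: lip_const_le; [exact: attn_lip_bound_ge0 | exact: attn_lip].
Qed.
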